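(* Let $\mathcal G=(\mathcal V,\mathcal E,W)$ be a network, $h\in\mathbb{R}^{\mathcal V}$, and consider the SNC game with binary actions on $\mathcal G$ with external field $h$, with set of Nash equilibria $\mathcal N$. Let $\mathcal V=\mathcal R\cup\mathcal S$, $\mathcal R\cap\mathcal S=\emptyset$, be a binary partition such that $\mathcal G_{\mathcal R}$ is unsigned. Let $h^-,h^+\in\mathbb{R}^{\mathcal R}$ be given by $h_i^+=h_i+w_i^{\mathcal S}$ and $h_i^-=h_i-w_i^{\mathcal S}$ for $i\in\mathcal R$. Assume $\mathcal G_{\mathcal R}$ is $(h^-,h^+)$-indecomposable and $$w_i^{\mathcal R}-|h_i|>w_i^{\mathcal S}\qquad\forall i\in\mathcal R.$$ Then: (i) if, for every $a\in\{\pm1\}$, the set $\mathcal N_{\mathcal S}^{(a\mathbf 1)}$ is globally BR-reachable for the $\mathcal S$-restricted game with strategy profile of players in $\mathcal R$ frozen to $a\mathbf 1$, then the set $\tilde{\mathcal N}=\{x^*\in\mathcal N:\ x^*_{\mathcal R}\in\{\mathbf 1,-\mathbf 1\}\}$ is nonempty and globally BR-reachable for the SNC game; (ii) if, for every $a\in\{\pm1\}$, there exists a nonempty subset $\bar{\mathcal N}_{\mathcal S}^{(a\mathbf 1)}\subseteq\mathcal N_{\mathcal S}^{(a\mathbf 1)}$ that is globally BR-stable for the $\mathcal S$-restricted game with strategy profile of players in $\mathcal R$ frozen to $a\mathbf 1$, then there exists a nonempty subset $\overline{\mathcal N}\subseteq\tilde{\mathcal N}$ that is globally BR-stable for the SNC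 game.
   Context: A network is a triple $\mathcal G=(\mathcal V,\mathcal E,W)$ where $\mathcal V$ is a finite nonempty set, $\mathcal E\subseteq\mathcal V\times\mathcal V$, and $W\in\mathbb{R}^{\mathcal V\times\mathcal V}$ has zero diagonal and satisfies $W_{ij}\neq0$ iff $(i,j)\in\mathcal E$ (weights may have either sign). It is unsigned if $W\ge0$ entrywise. For $\mathcal U\subseteq\mathcal V$, the subnetwork $\mathcal G_{\mathcal U}$ has node set $\mathcal U$, links $\mathcal E\cap(\mathcal U\times\mathcal U)$ and weight matrix $W_{\mathcal U\mathcal U}$. For $i\in\mathcal V$ and $\mathcal B\subseteq\mathcal V$, $w_i^{\mathcal B}=\sum_{j\in\mathcal B}|W_{ij}|$. $\mathbf 1$ is the all-ones vector. Indecomposability: a network with node set $\mathcal U$ and $h^-\le h^+$ in $\mathbb{R}^{\mathcal U}$ is $(h^-,h^+)$-indecomposable if for every partition $\mathcal U=\mathcal U^-\cup\mathcal U^+$ into two disjoint nonempty sets there is a node $i$ with either $i\in\mathcal U^+$ and $w_i^{\mathcal U^+}+h_i^+<w_i^{\mathcal U^-}$, or $i\in\mathcal U^-$ and $w_i^{\mathcal U^-}-h_i^-<w_i^{\mathcal U^+}$. The SNC game with binary actions on $\mathcal G$ with external field $h\in\mathbb{R}^{\mathcal V}$ has player set $\mathcal V$, action set $\{-1,+1\}$ for each player, strategy profiles $\mathcal X=\{\pm1\}^{\mathcal V}$ (written $x=(x_{\mathcal R},x_{\mathcal S})$), and utilities $u_i(x)=h_ix_i+x_i\sum_{j\in\mathcal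 V}W_{ij}x_j$. Best responses $\mathcal B_i(x_{-i})=\arg\max_{x_i\in\{\pm1\}}u_i(x_i,x_{-i})$; Nash equilibrium: $x^*_i\in\mathcal B_i(x^*_{-i})$ for all $i$. For $y\in\{\pm1\}^{\mathcal R}$, the $\mathcal S$-restricted game with strategy profile of players in $\mathcal R$ frozen to $y$ has player set $\mathcal S$, actions $\{\pm1\}$, and utilities $u_i^{(y)}(z)=u_i(y,z)$ for $i\in\mathcal S$, $z\in\{\pm1\}^{\mathcal S}$; $\mathcal N_{\mathcal S}^{(y)}$ is its set of Nash equilibria. For any game with binary actions and profile set $\mathcal Y$: a BR-path of length $l\ge0$ from $x$ to $y$ is a sequence $x^{(0)}=x,\dots,x^{(l)}=y$ such that for each $k$ some player $i_k$ has $x^{(k)}_{-i_k}=x^{(k-1)}_{-i_k}$ and $x^{(k)}_{i_k}\in\mathcal B_{i_k}(x^{(k-1)}_{-i_k})\setminus\{x^{(k-1)}_{i_k}\}$. A set $\mathcal Y^*\subseteq\mathcal Y$ is globally BR-reachable if from every profile there is a BR-path to some element of $\mathcal Y^*$; BR-invariant if there is no BR-path from an element of $\mathcal Y^*$ to an element outside; globally BR-stable if both. *)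

From mathcomp Require Import all_boot all_order all_algebra.
Set Implicit Arguments. Unset Strict Implicit. Unset Printing Implicit Defensive.
Import Order.TTheory GRing.Theory Num.Theory.
Local Open Scope ring_scope.

(* Actions {-1,+1} are encoded by bool: true = +1, false = -1. *)
Definition sgnb {R : numDomainType} (b : bool) : R := if b then 1 else -1.

Section Games.
Variables (R : numDomainType) (P : finType).
Definition game := P -> {ffun P -> bool} -> R.

Definition upd (x : {ffun P -> bool}) (i : P) (b : bool) : {ffun P -> bool} :=
  [ffun j => if j == i then b else x j].

Definition best_resp (u : game) (i : P) (x : {ffun P -> bool}) (b : bool) : Prop :=
  forall b', u i (upd x i b') <= u i (upd x i b).

Definition nash (u : game) (x : {ffun P -> bool}) : Prop :=
  forall i, best_resp u i x (x i).

Definition br_step (u : game) (x y : {ffun P -> bool}) : Prop :=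
  exists i, (forall j, j != i -> y j = x j) /\ best_resp u i x (y i) /\ y i != x i.

Inductive br_path (u : game) : {ffun P -> bool} -> {ffun P -> bool} -> Prop :=
| br_path_nil x : br_path u x x
| br_path_cons x y z : br_step u x y -> br_path u y z -> br_path u x z.

Definition glob_br_reachable (u : game) (Y : {ffun P -> bool} -> Prop) : Prop :=
  forall x, exists y, Y y /\ br_path u x y.

Definition br_invariant (u : game) (Y : {ffun P -> bool} -> Prop) : Prop :=
  forall x y, Y x -> br_path u x y -> Y y.

Definition glob_br_stable (u : game) (Y : {ffun P -> bool} -> Prop) : Prop :=
  glob_br_reachable u Y /\ br_invariant u Y.
End Games.

Section Networks.
Variables (R : numDomainType) (V : finType) (W : V -> V -> R).

Definition wsum (i : V) (B : {set V}) : R := \sum_(j in B) `|W i j|.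

Definition indecomposable (U : {set V}) (hm hp : V -> R) : Prop :=
  forall Um Up : {set V}, Um :|: Up = U -> [disjoint Um & Up] ->
    Um != set0 -> Up != set0 ->
    exists i, (i \in Up /\ wsum i Up + hp i < wsum i Um) \/
              (i \in Um /\ wsum i Um - hm i < wsum i Up).

Definition snc_game (h : V -> R) : game R V :=
  fun i x => h i * sgnb (x i) + sgnb (x i) * \sum_j W i j * sgnb (x j).

Definition merge (Rs Ss : {set V}) (y : {ffun {v : V | v \in Rs} -> bool})
  (z : {ffun {v : V | v \in Ss} -> bool}) : {ffun V -> bool} :=
  [ffun v => match (insub v : option {v : V | v \in Ss}) with
             | Some s => z s
             | None => match (insub v : option {v : V | v \in Rs}) with
                       | Some r => y r
                       | None => false end end].

Definition restricted_game (h : V -> R) (Rs Ss : {set V})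
  (y : {ffun {v : V | v \in Rs} -> bool}) : game R {v : V | v \in Ss} :=
  fun i z => snc_game h (val i) (merge y z).
End Networks.

From Pilot Require Import Defs.
From mathcomp Require Import all_boot all_order all_algebra.
From mathcomp Require Import lra.
Set Implicit Arguments. Unset Strict Implicit. Unset Printing Implicit Defensive.
Import Order.TTheory GRing.Theory Num.Theory.
Local Open Scope ring_scope.

(* In the SNC game, b is a best response of i to x iff sgnb b agrees in sign
   with the field F_i(x) = h_i + sum_j W_ij x_j.  The dominance condition makes
   every player of R strictly prefer the common action once R is in consensus,
   whatever S plays: a consensus of R is never broken, and from a consensus the
   BR-dynamics are exactly those of the S-restricted game.  Consensus is always
   BR-reachable: first let the +1 players of R with nonpositive field switch to
   -1; if some +1 player remains, all of them have positive field, and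
   indecomposability applied to the sign partition of R produces a -1 player
   with positive field.  Switching it to +1 only raises the fields inside R
   (the weights there are nonnegative), so repeating this reaches +1 on R. *)

Lemma br_path_trans (R : numDomainType) (P : finType) (u : game R P) x y z :
  br_path u x y -> br_path u y z -> br_path u x z.
Proof. by elim=> // x1 y1 z1 s _ IH /IH; apply: br_path_cons. Qed.

Lemma normr_sgnb (R : numDomainType) (b : bool) : `|sgnb b : R| = 1.
Proof. by case: b; rewrite /sgnb ?normrN normr1. Qed.

Section SNCGame.
Variables (R : realFieldType) (V : finType) (W : V -> V -> R) (h : V -> R).
Hypothesis W_diag0 : forall i, W i i = 0.

Definition snc_field (x : {ffun V -> bool}) i := h i + \sum_j W i j * sgnb (x j).

Notation u := (snc_game W h).

Lemma snc_game_upd x i b : u i (upd x i b) = sgnb b * snc_field x i.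
Proof.
rewrite /snc_game /snc_field ffunE eqxx mulrDr mulrC; congr (_ + _ * _).
apply: eq_bigr => j _; rewrite ffunE; case: eqP => [->|//].
by rewrite W_diag0 !mul0r.
Qed.

Lemma snc_best_respP i x b : best_resp u i x b <-> 0 <= sgnb b * snc_field x i.
Proof.
split=> [/(_ (~~ b))|H b']; rewrite !snc_game_upd.
  by case: b; rewrite /sgnb /=; lra.
by move: H; case: b; case: b'; rewrite /sgnb /=; lra.
Qed.

Lemma snc_br_step_upd (x : {ffun V -> bool}) i b :
  b != x i -> 0 <= sgnb b * snc_field x i -> br_step u x (upd x i b).
Proof.
move=> bx H; exists i; split; first by move=> j /negbTE ji; rewrite ffunE ji.
by rewrite ffunE eqxx; split=> //; apply/snc_best_respP.
Qed.

Variables Rs Ss : {set V}.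
Hypothesis RS_cover : Rs :|: Ss = [set: V].
Hypothesis RS_disjoint : [disjoint Rs & Ss].

Lemma notin_Rs_in_Ss k : k \notin Rs -> k \in Ss.
Proof.
move=> kR; have : k \in Rs :|: Ss by rewrite RS_cover inE.
by rewrite inE (negbTE kR).
Qed.

Hypothesis W_Rs_ge0 : forall i j, i \in Rs -> j \in Rs -> 0 <= W i j.
Hypothesis Rs_indecomposable :
  indecomposable W Rs (fun i => h i - wsum W i Ss) (fun i => h i + wsum W i Ss).
Hypothesis Rs_dominant : forall i, i \in Rs -> wsum W i Rs - `|h i| > wsum W i Ss.

Definition consensus (a : bool) (x : {ffun V -> bool}) := forall k, k \in Rs -> x k = a.

Definition Rs_plus (x : {ffun V -> bool}) := [set j in Rs | x j].
Definition Rs_minus (x : {ffun V -> bool}) := [set j in Rs | ~~ x j].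

Lemma Rs_plus_minus_partition x :
  Rs_minus x :|: Rs_plus x = Rs /\ [disjoint Rs_minus x & Rs_plus x].
Proof.
split; first by apply/setP => j; rewrite !inE; case: (x j); rewrite ?andbT ?andbF ?orbF.
by rewrite -setI_eq0; apply/eqP/setP => j; rewrite !inE; case: (x j); rewrite ?andbF.
Qed.

Lemma snc_field_Rs x i : i \in Rs ->
  `|snc_field x i - (h i + wsum W i (Rs_plus x) - wsum W i (Rs_minus x))| <= wsum W i Ss.
Proof.
move=> iR; rewrite /snc_field (bigID (mem Rs)) /= (bigID x) /=.
have -> : \sum_(j | (j \in Rs) && x j) W i j * sgnb (x j) = wsum W i (Rs_plus x).
  apply: eq_big => [j|j /andP[jR ->]]; first by rewrite inE.
  by rewrite mulr1 ger0_norm ?W_Rs_ge0.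
have -> : \sum_(j | (j \in Rs) && ~~ x j) W i j * sgnb (x j) = - wsum W i (Rs_minus x).
  rewrite /wsum -sumrN; apply: eq_big => [j|j /andP[jR /negbTE ->]]; first by rewrite inE.
  by rewrite /sgnb mulrN1 ger0_norm ?W_Rs_ge0.
have -> : \sum_(j | j \notin Rs) W i j * sgnb (x j) = \sum_(j in Ss) W i j * sgnb (x j).
  apply: eq_bigl => j; apply/idP/idP; first exact: notin_Rs_in_Ss.
  by move=> jS; apply/negP => jR; rewrite (disjointFr RS_disjoint jR) in jS.
set s := \sum_(j in Ss) _.
have -> : forall c p m : R, c + (p - m + s) - (c + p - m) = s by move=> *; lra.
apply: le_trans (ler_norm_sum _ _ _) _; apply: ler_sum => j _.
by rewrite normrM normr_sgnb mulr1.
Qed.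

Lemma consensus_field_gt0 a x i :
  consensus a x -> i \in Rs -> 0 < sgnb a * snc_field x i.
Proof.
move=> xa iR; have /ler_normlP[hlo hhi] := lexx `|h i|.
have dom := Rs_dominant iR; move: (snc_field_Rs x iR); rewrite ler_distl => /andP[lo hi].
have [Ep Em] : Rs_plus x = (if a then Rs else set0) /\ Rs_minus x = (if a then set0 else Rs).
  split; apply/setP => j; case: a xa => xa; rewrite !inE;
    by case: (boolP (j \in Rs)) => //= /xa ->.
have wsum0 : wsum W i set0 = 0 by rewrite /wsum big_set0.
by move: lo hi; rewrite Ep Em; case: a {xa Ep Em}; rewrite wsum0 /sgnb /=; lra.
Qed.

Lemma snc_field_upd_true (x : {ffun V -> bool}) i k :
  i \in Rs -> k \in Rs -> snc_field x k <= snc_field (upd x i true) k.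
Proof.
move=> iR kR; rewrite /snc_field lerD2l; apply: ler_sum => j _; rewrite ffunE.
case: eqP => [->|_] //; apply: ler_wpM2l; first exact: W_Rs_ge0.
by case: (x i); rewrite /sgnb //; lra.
Qed.

Lemma Rs_minus_field_gt0 x :
  Rs_plus x != set0 -> Rs_minus x != set0 ->
  (forall k, k \in Rs_plus x -> 0 < snc_field x k) ->
  exists2 j, j \in Rs_minus x & 0 < snc_field x j.
Proof.
move=> Pn Mn Ppos; have [cover disj] := Rs_plus_minus_partition x.
have [j [[jP Hj]|[jM Hj]]] := Rs_indecomposable cover disj Mn Pn.
  have jR : j \in Rs by rewrite -cover inE jP orbT.
  have := Ppos j jP; move: (snc_field_Rs x jR); rewrite ler_distl => /andP[lo hi].
  lra.
have jR : j \in Rs by rewrite -cover inE jM.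
exists j => //; move: (snc_field_Rs x jR); rewrite ler_distl => /andP[lo hi].
lra.
Qed.

Lemma consensus_true_reachable x :
  Rs_plus x != set0 -> (forall k, k \in Rs_plus x -> 0 < snc_field x k) ->
  exists2 y, consensus true y & br_path u x y.
Proof.
move En : #|Rs_minus x| => n; elim: n x En => [|n IH] x Mn Pn Ppos.
  exists x => [k kR|]; last exact: br_path_nil.
  by apply/negPn/negP => xk; have := card0_eq Mn k; rewrite !inE kR xk.
have [j jM Fj] : exists2 j, j \in Rs_minus x & 0 < snc_field x j.
  by apply: Rs_minus_field_gt0 => //; rewrite -card_gt0 Mn.
have /andP[jR xj] : (j \in Rs) && ~~ x j by rewrite inE in jM.
set x' := upd x j true.
have step : br_step u x x' by apply: snc_br_step_upd; rewrite ?(negbTE xj) // mul1r ltW.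
have M' : Rs_minus x' = Rs_minus x :\ j.
  by apply/setP => k; rewrite !inE ffunE; case: eqP => [->|] //=; rewrite andbF.
have P' : Rs_plus x' = j |: Rs_plus x.
  by apply/setP => k; rewrite !inE ffunE; case: eqP => [->|] //=; rewrite jR.
have [|||y yc p] := IH x'.
- by move: Mn; rewrite M' (cardsD1 j) jM add1n => -[].
- by apply/set0Pn; exists j; rewrite P' setU11.
- move=> k; rewrite P' => /setU1P[->|kP].
    exact: lt_le_trans Fj (snc_field_upd_true _ jR jR).
  have kR : k \in Rs by rewrite inE in kP; case/andP: kP.
  exact: lt_le_trans (Ppos k kP) (snc_field_upd_true _ jR kR).
by exists y => //; apply: br_path_cons step p.
Qed.

Lemma consensus_reachable x : exists a, exists2 y, consensus a y & br_path u x y.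
Proof.
move En : #|Rs_plus x| => n; elim: n x En => [|n IH] x Pn.
  exists false, x => [k kR|]; last exact: br_path_nil.
  by apply/negP => xk; have := card0_eq Pn k; rewrite !inE kR xk.
case: (pickP (fun k => (k \in Rs_plus x) && (snc_field x k <= 0))) => [k /andP[kP Fk]|Hpos].
  have /andP[kR xk] : (k \in Rs) && x k by rewrite inE in kP.
  have step : br_step u x (upd x k false).
    by apply: snc_br_step_upd; rewrite ?xk // mulN1r oppr_ge0.
  have [|a [y yc p]] := IH (upd x k false).
    have -> : Rs_plus (upd x k false) = Rs_plus x :\ k.
      by apply/setP => j; rewrite !inE ffunE; case: eqP => [->|] //=; rewrite andbF.
    by move: Pn; rewrite (cardsD1 k) kP add1n => -[].
  by exists a, y => //; apply: br_path_cons step p.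
exists true; apply: consensus_true_reachable; first by rewrite -card_gt0 Pn.
by move=> k kP; have := Hpos k; rewrite kP /= ltNge => ->.
Qed.

Notation frozen a := [ffun _ : {v : V | v \in Rs} => a].
Notation rgame y := (@restricted_game R V W h Rs Ss y).
Notation merge := (@Defs.merge V Rs Ss).

Definition proj_Ss (x : {ffun V -> bool}) := [ffun s : {v : V | v \in Ss} => x (val s)].

Lemma merge_Ss y z (s : {v : V | v \in Ss}) : merge y z (val s) = z s.
Proof. by rewrite ffunE valK. Qed.

Lemma consensus_merge_frozen a z : consensus a (merge (frozen a) z).
Proof.
move=> v vR; rewrite ffunE; case: insubP => [s sS _|_].
  by rewrite (disjointFr RS_disjoint vR) in sS.
by case: insubP => [r _ _|]; [rewrite ffunE | rewrite vR].
Qed.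

Lemma merge_proj_Ss a x : consensus a x -> merge (frozen a) (proj_Ss x) = x.
Proof.
move=> xa; apply/ffunP => v; have [vR|vR] := boolP (v \in Rs).
  by rewrite consensus_merge_frozen // xa.
have vS := notin_Rs_in_Ss vR.
by rewrite -[v]/(val (Sub v vS : {v : V | v \in Ss})) merge_Ss ffunE.
Qed.

Lemma proj_Ss_merge y z : proj_Ss (merge y z) = z.
Proof. by apply/ffunP => s; rewrite ffunE merge_Ss. Qed.

Lemma merge_upd y z s b : merge y (upd z s b) = upd (merge y z) (val s) b.
Proof.
apply/ffunP => v; rewrite [RHS]ffunE; have [vS|vS] := boolP (v \in Ss).
  rewrite -[v]/(val (Sub v vS : {v : V | v \in Ss})) !merge_Ss ffunE.
  by rewrite -(inj_eq val_inj).
have -> : (v == val s) = false by apply: contraNF vS => /eqP ->; apply: valP.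
by rewrite !ffunE; case: insubP => [s' s'S _|_] //; rewrite s'S in vS.
Qed.

Lemma restricted_best_respP y s z b :
  best_resp (rgame y) s z b <-> best_resp u (val s) (merge y z) b.
Proof. by split=> H b'; have := H b'; rewrite /restricted_game !merge_upd. Qed.

Lemma br_path_merge y z z' : br_path (rgame y) z z' -> br_path u (merge y z) (merge y z').
Proof.
elim=> [z0|z0 z1 z2 [s [z1E [z1s z1s_ne]]] _ IH]; first exact: br_path_nil.
apply: br_path_cons IH; exists (val s); split.
  move=> j js; rewrite !ffunE; case: insubP => [t _ tE|_] //.
  by rewrite z1E // -(inj_eq val_inj) tE.
by rewrite !merge_Ss; split=> //; apply/restricted_best_respP.
Qed.

(* The players of a consensus of R strictly prefer to keep it, so only players
   of S can move. *)
Lemma br_step_consensus a x x' : consensus a x -> br_step u x x' ->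
  consensus a x' /\ br_step (rgame (frozen a)) (proj_Ss x) (proj_Ss x').
Proof.
move=> xa [k [x'E [x'k x'k_ne]]]; have [kR|kR] := boolP (k \in Rs).
  move/snc_best_respP: x'k; have := consensus_field_gt0 xa kR.
  by move: x'k_ne; rewrite (xa k kR); case: a {xa}; case: (x' k); rewrite /sgnb /=; lra.
have kS := notin_Rs_in_Ss kR.
split=> [j jR|]; first by rewrite x'E ?xa //; apply: contraNneq kR => <-.
exists (Sub k kS); split.
  by move=> j jk; rewrite !ffunE x'E //; apply: contra jk => /eqP E; apply/eqP/val_inj.
split; last by rewrite !ffunE SubK.
by apply/restricted_best_respP; rewrite (merge_proj_Ss xa) !ffunE SubK.
Qed.

Lemma br_path_consensus a x x' : consensus a x -> br_path u x x' ->
  consensus a x' /\ br_path (rgame (frozen a)) (proj_Ss x) (proj_Ss x').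
Proof.
move=> + p; elim: p => [x0|x0 x1 x2 st _ IH] xa; first by split=> //; apply: br_path_nil.
have [x1a st'] := br_step_consensus xa st; have [x2a p] := IH x1a.
by split=> //; apply: br_path_cons st' p.
Qed.

Lemma nash_merge_frozen a z : nash (rgame (frozen a)) z -> nash u (merge (frozen a) z).
Proof.
move=> zN i; have [iR|iR] := boolP (i \in Rs).
  apply/snc_best_respP/ltW; rewrite consensus_merge_frozen //.
  exact/consensus_field_gt0/iR/consensus_merge_frozen.
have iS := notin_Rs_in_Ss iR.
rewrite -[i]/(val (Sub i iS : {v : V | v \in Ss})) merge_Ss.
exact/restricted_best_respP.
Qed.

(* [N a] is a set of profiles of the S-restricted game with R frozen to a. *)
Variable N : bool -> {ffun {v : V | v \in Ss} -> bool} -> Prop.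

Definition lift_Ss x := exists a, consensus a x /\ N a (proj_Ss x).

Lemma lift_Ss_merge a z : N a z -> lift_Ss (merge (frozen a) z).
Proof. by exists a; rewrite proj_Ss_merge; split=> //; apply: consensus_merge_frozen. Qed.

Lemma lift_Ss_nash x : (forall a z, N a z -> nash (rgame (frozen a)) z) ->
  lift_Ss x -> nash u x /\ exists a, consensus a x.
Proof.
move=> NN [a [xa xN]]; split; last by exists a.
by rewrite -(merge_proj_Ss xa); apply/nash_merge_frozen/NN.
Qed.

Lemma lift_Ss_reachable :
  (forall a, glob_br_reachable (rgame (frozen a)) (N a)) -> glob_br_reachable u lift_Ss.
Proof.
move=> Nreach x; have [a [y ya p]] := consensus_reachable x.
have [z [zN pz]] := Nreach a (proj_Ss y).
exists (merge (frozen a) z); split; first exact: lift_Ss_merge.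
by apply: br_path_trans p _; rewrite -{1}(merge_proj_Ss ya); apply: br_path_merge.
Qed.

Lemma lift_Ss_invariant :
  (forall a, br_invariant (rgame (frozen a)) (N a)) -> br_invariant u lift_Ss.
Proof.
move=> Ninv x x' [a [xa xN]] p; have [x'a p'] := br_path_consensus xa p.
by exists a; split=> //; apply: Ninv p'.
Qed.

End SNCGame.

Theorem proposition5 (R : realFieldType) (V : finType) (W : V -> V -> R)
  (h : V -> R) (Rs Ss : {set V}) :
  (forall i, W i i = 0) ->
  Rs :|: Ss = [set: V] -> [disjoint Rs & Ss] -> Rs != set0 ->
  (forall i j, i \in Rs -> j \in Rs -> 0 <= W i j) ->
  indecomposable W Rs (fun i => h i - wsum W i Ss) (fun i => h i + wsum W i Ss) ->
  (forall i, i \in Rs -> wsum W i Rs - `|h i| > wsum W i Ss) ->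
  let Ntilde := fun x : {ffun V -> bool} =>
    nash (snc_game W h) x /\ exists a : bool, forall i, i \in Rs -> x i = a in
  ((forall a : bool,
      glob_br_reachable (@restricted_game R V W h Rs Ss [ffun _ => a])
        (nash (@restricted_game R V W h Rs Ss [ffun _ => a]))) ->
    (exists x, Ntilde x) /\ glob_br_reachable (snc_game W h) Ntilde)
  /\
  ((forall a : bool, exists Nbar : {ffun {v : V | v \in Ss} -> bool} -> Prop,
      (forall z, Nbar z -> nash (@restricted_game R V W h Rs Ss [ffun _ => a]) z) /\
      (exists z, Nbar z) /\
      glob_br_stable (@restricted_game R V W h Rs Ss [ffun _ => a]) Nbar) ->
    exists Nbar : {ffun V -> bool} -> Prop,
      (forall x, Nbar x -> Ntilde x) /\ (exists x, Nbar x) /\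
      glob_br_stable (snc_game W h) Nbar).
Proof.
move=> W0 cover disj _ Wge0 indec dom Ntilde.
have lift_nash := lift_Ss_nash W0 cover disj Wge0 dom.
have lift_reach := lift_Ss_reachable W0 cover disj Wge0 indec.
have lift_inv := lift_Ss_invariant W0 cover disj Wge0 dom.
split=> [Nash_reach | Nbar_stable].
  pose N a := nash (@restricted_game R V W h Rs Ss [ffun _ => a]).
  split.
    have [z [zN _]] := Nash_reach true [ffun => false].
    by eexists; apply: (lift_nash N) (lift_Ss_merge disj (N := N) zN).
  move=> x; have [y [yN p]] := lift_reach N Nash_reach x.
  by exists y; split=> //; apply: (lift_nash N).
have [N1 [N1nash [[z1 z1N] [N1reach N1inv]]]] := Nbar_stable true.
have [N0 [N0nash [_ [N0reach N0inv]]]] := Nbar_stable false.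
pose N a := if a then N1 else N0.
exists (lift_Ss Rs N); split; first by move=> x; apply: lift_nash; case.
split; first by eexists; apply: (lift_Ss_merge disj (N := N) (a := true) z1N).
by split; [apply: lift_reach | apply: lift_inv]; case.
Qed.
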